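(* Let $M$ and $N$ be MV-algebras and let $p\colon M\to N$ be a function with $p(0)=0$ and $p(1)=1$. The following are equivalent: (1) $p$ is a probability map; (2) $p(a\oplus b)=p(a)+p(b)-p(a\odot b)$ for all $a,b\in M$, where $+$ and $-$ are the operations of the enveloping unital $\ell$-group $\Xi(N)$ of $N$; (3) for all $a,b\in M$, if $a\odot b=0$, then $p(a\oplus b)=p(a)\oplus p(b)$ and $p(a)\odot p(b)=0$; (4) for all $a,b\in M$, if $a\odot b=0$, then $p(a\oplus b)=p(a)+p(b)$ (sum computed in $\Xi(N)$).
   Context: For an MV-algebra $(M,\oplus,\neg,0)$: $1\coloneqq\neg 0$, $a\odot b\coloneqq\neg(\neg a\oplus\neg b)$, $a\vee b\coloneqq\neg(\neg a\oplus b)\oplus b$, $a\wedge b\coloneqq\neg(\neg a\vee\neg b)$. A probability map is a function $p\colon M\to N$ between MV-algebras such that for all $a,b\in M$: (P1) $p(a\oplus b)=p(a)\oplus p(b\wedge\neg a)$; (P2) $p(\neg a)=\neg p(a)$; (P3) $p(1)=1$. By Mundici's $\Gamma$-functor theory every MV-algebra $N$ is isomorphic to the unit interval $\Gamma(G,u)=[0,u]$ of a unique unital lattice-ordered Abelian group $(G,u)$ with $a\oplus b=(a+b)\wedge u$, $\neg a=u-a$; this $G$ is denoted $\Xi(N)$ (the enveloping unital $\ell$-group), and $N$ is identified with $[0,u]\subseteq\Xi(N)$. *)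

From mathcomp Require Import all_boot all_algebra.
Set Implicit Arguments. Unset Strict Implicit. Unset Printing Implicit Defensive.
Import GRing.Theory.
Local Open Scope ring_scope.

Record MVAlgebra := {
  mv_car :> Type;
  mv_oplus : mv_car -> mv_car -> mv_car;
  mv_neg : mv_car -> mv_car;
  mv_zero : mv_car;
  mv_assoc : forall a b c, mv_oplus a (mv_oplus b c) = mv_oplus (mv_oplus a b) c;
  mv_comm : forall a b, mv_oplus a b = mv_oplus b a;
  mv_zeroR : forall a, mv_oplus a mv_zero = a;
  mv_negK : forall a, mv_neg (mv_neg a) = a;
  mv_oneR : forall a, mv_oplus a (mv_neg mv_zero) = mv_neg mv_zero;
  mv_luk : forall a b, mv_oplus (mv_neg (mv_oplus (mv_neg a) b)) b
                     = mv_oplus (mv_neg (mv_oplus (mv_neg b) a)) a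
}.

Definition mv_one (M : MVAlgebra) : M := mv_neg (mv_zero M).
Definition mv_odot (M : MVAlgebra) (a b : M) : M :=
  mv_neg (mv_oplus (mv_neg a) (mv_neg b)).
Definition mv_join (M : MVAlgebra) (a b : M) : M :=
  mv_oplus (mv_neg (mv_oplus (mv_neg a) b)) b.
Definition mv_meet (M : MVAlgebra) (a b : M) : M :=
  mv_neg (mv_join (mv_neg a) (mv_neg b)).

Definition probability_map (M N : MVAlgebra) (p : M -> N) : Prop :=
  (forall a b : M, p (mv_oplus a b) = mv_oplus (p a) (p (mv_meet b (mv_neg a))))
  /\ (forall a : M, p (mv_neg a) = mv_neg (p a))
  /\ p (mv_one M) = mv_one N.

Definition is_lgroup (G : zmodType) (le : G -> G -> Prop)
    (meet join : G -> G -> G) : Prop :=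
  (forall x, le x x)
  /\ (forall x y, le x y -> le y x -> x = y)
  /\ (forall x y z, le x y -> le y z -> le x z)
  /\ (forall x y, le (meet x y) x /\ le (meet x y) y
                  /\ forall z, le z x -> le z y -> le z (meet x y))
  /\ (forall x y, le x (join x y) /\ le y (join x y)
                  /\ forall z, le x z -> le y z -> le (join x y) z)
  /\ (forall x y z, le x y -> le (x + z) (y + z)).

Definition is_strong_unit (G : zmodType) (le : G -> G -> Prop) (u : G) : Prop :=
  le 0 u /\ forall x : G, exists n : nat, le x (u *+ n).

(* phi : N -> G is an MV-isomorphism of N onto Gamma(G,u) = [0,u] with
   a (+) b = (a + b) /\ u and ~a = u - a. *)
Definition gamma_iso (N : MVAlgebra) (G : zmodType) (le : G -> G -> Prop)
    (meet : G -> G -> G) (u : G) (phi : N -> G) : Prop :=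
  injective phi
  /\ (forall x : G, (le 0 x /\ le x u) <-> exists a : N, phi a = x)
  /\ phi (mv_zero N) = 0
  /\ (forall a b : N, phi (mv_oplus a b) = meet (phi a + phi b) u)
  /\ (forall a : N, phi (mv_neg a) = u - phi a).

From mathcomp Require Import all_boot all_algebra.
Set Implicit Arguments. Unset Strict Implicit.
Import GRing.Theory.
Local Open Scope ring_scope.

(* Every [a (+) b] splits into the orthogonal sum [a (+) (b /\ ~a)]. A
   probability map is therefore the same as a map that is additive on
   orthogonal pairs and sends them to orthogonal pairs: the uniqueness of
   complements gives (P2). In [Gamma(G, u)] the pair [x, y] is orthogonal
   exactly when [x + y <= u], and then [x (+) y = x + y], which identifies
   (3) with (4). Finally [a (+) b = b (+) (a /\ ~b)] and
   [~a (+) ~b = ~a (+) (a /\ ~b)] are orthogonal decompositions; comparing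
   them in [G] yields the inclusion-exclusion formula (2). *)

Section MVAlgebraTheory.

Variable M : MVAlgebra.
Implicit Types a b x y : M.

Lemma mv_oplus0l a : mv_oplus (mv_zero M) a = a.
Proof. by rewrite mv_comm mv_zeroR. Qed.

Lemma mv_oplus1l a : mv_oplus (mv_one M) a = mv_one M.
Proof. by rewrite mv_comm mv_oneR. Qed.

Lemma mv_oplusNl a : mv_oplus (mv_neg a) a = mv_one M.
Proof.
have := mv_luk (mv_one M) a.
by rewrite /mv_one mv_negK mv_oplus0l !mv_oneR.
Qed.

Lemma mv_oplusN a : mv_oplus a (mv_neg a) = mv_one M.
Proof. by rewrite mv_comm mv_oplusNl. Qed.

Lemma mv_odotN a : mv_odot a (mv_neg a) = mv_zero M.
Proof. by rewrite /mv_odot mv_negK mv_oplusNl /mv_one mv_negK. Qed.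

Lemma mv_odot0E a b :
  mv_odot a b = mv_zero M <-> mv_oplus (mv_neg a) (mv_neg b) = mv_one M.
Proof. by rewrite /mv_odot /mv_one; split=> [<-|->]; rewrite mv_negK. Qed.

Lemma mv_joinC a b : mv_join a b = mv_join b a.
Proof. exact: mv_luk. Qed.

Lemma mv_meetC a b : mv_meet a b = mv_meet b a.
Proof. by rewrite /mv_meet mv_joinC. Qed.

Lemma mv_odot_meetN a b : mv_odot a (mv_meet b (mv_neg a)) = mv_zero M.
Proof.
rewrite /mv_odot /mv_meet /mv_join !mv_negK mv_comm -mv_assoc (mv_comm a).
by rewrite mv_oplusNl mv_oneR /mv_one mv_negK.
Qed.

Lemma mv_oplus_meetN a b : mv_oplus a (mv_meet b (mv_neg a)) = mv_oplus a b.
Proof.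
rewrite /mv_meet /mv_join !mv_negK mv_comm.
have -> := mv_luk (mv_oplus b a) a.
rewrite (mv_comm b) (mv_assoc (mv_neg a)) mv_oplusNl mv_oplus1l.
by rewrite /mv_one mv_negK mv_oplus0l.
Qed.

Lemma mv_meetN_id a b : mv_odot a b = mv_zero M -> mv_meet b (mv_neg a) = b.
Proof.
move/mv_odot0E => ab0.
rewrite /mv_meet mv_joinC /mv_join !mv_negK ab0.
by rewrite /mv_one mv_negK mv_oplus0l mv_negK.
Qed.

Lemma mv_negE_orth a b :
  mv_odot a b = mv_zero M -> mv_neg a = mv_oplus b (mv_neg (mv_oplus a b)).
Proof.
move/mv_odot0E => ab0.
have := mv_luk b (mv_neg a).
rewrite (mv_comm (mv_neg b)) ab0 /mv_one mv_negK mv_oplus0l => ->.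
by rewrite mv_negK mv_comm.
Qed.

Lemma mv_odot_oplusr x y z :
  mv_neg x = mv_oplus y z -> mv_odot x y = mv_zero M.
Proof.
move=> nx; apply/mv_odot0E; rewrite nx (mv_comm y) -mv_assoc mv_oplusN.
exact: mv_oneR.
Qed.

(* [x (+) y = 1] says [~x <= y], and [x (.) y = 0] says [y <= ~x]. *)
Lemma mv_complement_unique x y :
  mv_oplus x y = mv_one M -> mv_odot x y = mv_zero M -> y = mv_neg x.
Proof.
move=> xy1 /mv_odot0E nxy1.
have := mv_joinC (mv_neg x) y.
rewrite /mv_join mv_negK xy1 (mv_comm (mv_neg y)) nxy1 /mv_one mv_negK.
by rewrite !mv_oplus0l.
Qed.

End MVAlgebraTheory.

Section OrthogonalMaps.

Variables (M N : MVAlgebra) (p : M -> N).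

Lemma probability_map_orthogonal : probability_map p ->
  forall a b : M, mv_odot a b = mv_zero M ->
    p (mv_oplus a b) = mv_oplus (p a) (p b) /\ mv_odot (p a) (p b) = mv_zero N.
Proof.
move=> [pD [pN _]] a b ab0; split; first by rewrite pD mv_meetN_id.
apply: (mv_odot_oplusr (z := p (mv_meet (mv_neg (mv_oplus a b)) (mv_neg b)))).
by rewrite -pN (mv_negE_orth ab0) pD.
Qed.

Lemma orthogonal_probability_map : p (mv_one M) = mv_one N ->
  (forall a b : M, mv_odot a b = mv_zero M ->
    p (mv_oplus a b) = mv_oplus (p a) (p b)
    /\ mv_odot (p a) (p b) = mv_zero N) ->
  probability_map p.
Proof.
move=> p1 pD; split; last split=> //.
  by move=> a b; rewrite -mv_oplus_meetN; case: (pD _ _ (mv_odot_meetN a b)).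
move=> a; have [pa1 pa0] := pD _ _ (mv_odotN a).
by apply: mv_complement_unique pa0; rewrite -pa1 mv_oplusN.
Qed.

End OrthogonalMaps.

Section GammaRepresentation.

Variables (N : MVAlgebra) (G : zmodType) (le : G -> G -> Prop).
Variables (meet join : G -> G -> G) (u : G) (phi : N -> G).
Hypothesis lgroupG : is_lgroup le meet join.
Hypothesis gammaN : gamma_iso le meet u phi.
Implicit Types (x y z : N) (g h k : G).

Lemma le_antisym g h : le g h -> le h g -> g = h.
Proof. by case: lgroupG => _ [/(_ g h)]. Qed.

Lemma le_add2r g h k : le g h -> le (g + k) (h + k).
Proof. by case: lgroupG => _ [_ [_ [_ [_ /(_ g h k)]]]]. Qed.

Lemma le_add2r_rev g h k : le (g + k) (h + k) -> le g h.
Proof. by move/(le_add2r (- k)); rewrite !addrK. Qed.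

Lemma meet_lel g h : le (meet g h) g.
Proof. by case: lgroupG => _ [_ [_ [/(_ g h) []]]]. Qed.

Lemma meet_l g h : le g h -> meet g h = g.
Proof.
case: lgroupG => refl [_ [_ [/(_ g h) [glb_g [_ glb]] _]]] gh.
exact: le_antisym (glb _ (refl g) gh).
Qed.

Lemma meet_r g h : le h g -> meet g h = h.
Proof.
case: lgroupG => refl [_ [_ [/(_ g h) [_ [glb_h glb]] _]]] hg.
exact: le_antisym (glb _ hg (refl h)).
Qed.

Lemma phi_inj : injective phi. Proof. by case: gammaN. Qed.

Lemma phi0 : phi (mv_zero N) = 0. Proof. by case: gammaN => _ [_ []]. Qed.

Lemma phi_oplus x y : phi (mv_oplus x y) = meet (phi x + phi y) u.
Proof. by case: gammaN => _ [_ [_ []]]. Qed.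

Lemma phi_neg x : phi (mv_neg x) = u - phi x.
Proof. by case: gammaN => _ [_ [_ []]]. Qed.

Lemma phi_le_unit x : le (phi x) u.
Proof.
by case: gammaN => _ [/(_ (phi x)) [_ /(_ (ex_intro _ x erefl)) []]].
Qed.

Lemma phi_oplusE x y :
  le (phi x + phi y) u -> phi (mv_oplus x y) = phi x + phi y.
Proof. by move=> le_xy; rewrite phi_oplus meet_l. Qed.

Lemma phi_odot0 x y : mv_odot x y = mv_zero N <-> le (phi x + phi y) u.
Proof.
set s := phi x + phi y.
have unit_le : le u (u - phi x + (u - phi y)) <-> le s u.
  rewrite -addrACA -opprD -/s -addrA.
  split=> [le_u|/(le_add2r (u - s))]; last by rewrite subrKC.
  by apply: (le_add2r_rev (k := u - s)); rewrite subrKC.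
apply: (iff_trans _ unit_le); split=> [/(congr1 phi)|le_u].
  rewrite /mv_odot phi_neg phi_oplus !phi_neg phi0 => /subr0_eq {1}->.
  exact: meet_lel.
apply: phi_inj.
by rewrite /mv_odot phi_neg phi_oplus !phi_neg phi0 meet_r ?subrr.
Qed.

Lemma phi_eq_addE x y z :
  phi z = phi x + phi y <-> z = mv_oplus x y /\ mv_odot x y = mv_zero N.
Proof.
split=> [zE|[-> /phi_odot0]]; last exact: phi_oplusE.
have le_xy : le (phi x + phi y) u by rewrite -zE; exact: phi_le_unit.
by split; [apply: phi_inj; rewrite phi_oplusE | apply/phi_odot0].
Qed.

Section Valuation.

Variables (M : MVAlgebra) (p : M -> N).

Lemma orthogonal_phi_additiveE :
  (forall a b : M, mv_odot a b = mv_zero M ->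
    p (mv_oplus a b) = mv_oplus (p a) (p b) /\ mv_odot (p a) (p b) = mv_zero N)
  <-> (forall a b : M, mv_odot a b = mv_zero M ->
    phi (p (mv_oplus a b)) = phi (p a) + phi (p b)).
Proof. by split=> pD a b /pD /phi_eq_addE. Qed.

Lemma probability_map_valuation : probability_map p ->
  forall a b : M,
    phi (p (mv_oplus a b)) = phi (p a) + phi (p b) - phi (p (mv_odot a b)).
Proof.
move=> pmap a b; have [_ [pN _]] := pmap.
have additive :=
  proj1 orthogonal_phi_additiveE (probability_map_orthogonal pmap).
set d := mv_meet a (mv_neg b).
have sum_ab : phi (p (mv_oplus a b)) = phi (p b) + phi (p d).
  by rewrite mv_comm -mv_oplus_meetN additive ?mv_odot_meetN.
have sum_NaNb :
    phi (p (mv_oplus (mv_neg a) (mv_neg b))) = u - phi (p a) + phi (p d).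
  have dE : d = mv_meet (mv_neg b) (mv_neg (mv_neg a)).
    by rewrite mv_negK mv_meetC.
  by rewrite -mv_oplus_meetN -dE additive ?dE ?mv_odot_meetN // pN phi_neg.
rewrite /mv_odot pN phi_neg sum_NaNb sum_ab.
rewrite opprB (addrAC _ (phi (p d))) (addrAC u) subrr add0r.
by rewrite addrACA subrr add0r.
Qed.

Lemma valuation_orthogonal_additive : p (mv_zero M) = mv_zero N ->
  (forall a b : M,
    phi (p (mv_oplus a b)) = phi (p a) + phi (p b) - phi (p (mv_odot a b))) ->
  forall a b : M, mv_odot a b = mv_zero M ->
    phi (p (mv_oplus a b)) = phi (p a) + phi (p b).
Proof. by move=> p0 pV a b ab0; rewrite pV ab0 p0 phi0 subr0. Qed.

End Valuation.

End GammaRepresentation.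

Theorem proposition3p3 (M N : MVAlgebra) (p : M -> N)
  (p0 : p (mv_zero M) = mv_zero N) (p1 : p (mv_one M) = mv_one N)
  (G : zmodType) (le : G -> G -> Prop) (meet join : G -> G -> G) (u : G)
  (HG : is_lgroup le meet join) (Hu : is_strong_unit le u)
  (phi : N -> G) (Hphi : gamma_iso le meet u phi) :
  (probability_map p <->
     (forall a b : M,
        phi (p (mv_oplus a b)) = phi (p a) + phi (p b) - phi (p (mv_odot a b))))
  /\ (probability_map p <->
     (forall a b : M, mv_odot a b = mv_zero M ->
        p (mv_oplus a b) = mv_oplus (p a) (p b)
        /\ mv_odot (p a) (p b) = mv_zero N))
  /\ (probability_map p <->
     (forall a b : M, mv_odot a b = mv_zero M ->
        phi (p (mv_oplus a b)) = phi (p a) + phi (p b))).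
Proof.
have iff13 := conj (@probability_map_orthogonal _ _ p)
                   (orthogonal_probability_map p1).
have iff34 := orthogonal_phi_additiveE HG Hphi p.
split; last split; [split | exact: iff13 | exact: iff_trans iff13 iff34].
  exact: (probability_map_valuation HG Hphi).
move=> pV; apply/iff13/iff34 => a b.
exact: (valuation_orthogonal_additive Hphi p0 pV).
Qed.
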